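(* In the setting below, suppose $I+M(n,m)$ is invertible for all $(n,m)\in\mathbb{Z}^2$. Then $w=c\,(I+M)^{-1}r$ satisfies the lattice potential KdV equation $$(p+q+w-\hat{\tilde w})(p-q+\hat w-\tilde w)=p^2-q^2\quad\text{for all }(n,m).$$
   Context: Setting: $p,q\in\mathbb{C}$; $\tilde f(n,m)=f(n+1,m)$, $\hat f(n,m)=f(n,m+1)$, $\hat{\tilde f}(n,m)=f(n+1,m+1)$. $\Gamma=\mathrm{Diag}(\mathrm{Diag}(k_1,\dots,k_{N_1}),\Gamma_J^{[N_2]}(\kappa_2),\dots,\Gamma_J^{[N_s]}(\kappa_s))$ with $\Gamma^{[N]}_J(\kappa)$ the $N\times N$ matrix with $\kappa$ on the diagonal and $1$ on the subdiagonal; all eigenvalues $\lambda,\mu$ of $\Gamma$ satisfy $\lambda+\mu\ne0$, and $p,q\notin\{\pm\lambda\}$. $c=(c^{(1)},\dots,c^{(s)})$ a constant row vector (block lengths $N_1,\dots,N_s$). With $\rho(k)=\big(\tfrac{p+k}{p-k}\big)^n\big(\tfrac{q+k}{q-k}\big)^m\rho^0$ and $\rho_i=\rho(k_i)$: $r=(\rho_1,\dots,\rho_{N_1},r_J(\kappa_2),\dots,r_J(\kappa_s))^T$, $r_J(\kappa)=(\partial_k^l\rho/l!|_{k=\kappa})_{l=0}^{N_j-1}$; $M=\mathcal{A}FGH$ where $F=\mathrm{Diag}(\rho_1,\dots,\rho_{N_1},F_J(\kappa_2),\dots)$ with $F_J(\kappa)$ lower triangular, $(i,j)$ entry $\partial_k^{i-j}\rho|_{\kappa}/(i-j)!$;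 $H=\mathrm{Diag}(c_1,\dots,c_{N_1},H_J(c^{(2)}),\dots)$ with $H_J(d)$ having $(i,j)$ entry $d_{i+j-1}$ if $i+j-1\le N_j$ else $0$; $G$ symmetric block matrix with $G_{1,1}=(1/(k_i+k_j))$, $G_{1,j}$ with $(l,t)$ entry $-(-1/(k_l+\kappa_j))^t$, $G_{i,j}$ ($1<i\le j$) with $(l,t)$ entry $\binom{l+t-2}{l-1}(-1)^{l+t}/(\kappa_i+\kappa_j)^{l+t-1}$; and $r$ is replaced by $\mathcal{A}r$, where $\mathcal{A}=\mathrm{Diag}(I_{N_1},\mathcal{A}_2,\dots,\mathcal{A}_s)$, each $\mathcal{A}_j$ a constant lower triangular Toeplitz matrix. *)

From HB Require Import structures.
From mathcomp Require Import all_boot all_order all_algebra.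
Set Implicit Arguments. Unset Strict Implicit. Unset Printing Implicit Defensive.
Import Order.TTheory GRing.Theory Num.Theory.
Local Open Scope ring_scope.

Section LPKdV.
Variable C : numClosedFieldType.

Definition rho (p q : C) (n m : int) (rho0 k : C) : C :=
  ((p + k) / (p - k)) ^ n * ((q + k) / (q - k)) ^ m * rho0.

(* ((p+X)/(p-X))^n as a pair (numerator, denominator) of polynomials in X *)
Definition pw_pair (p : C) (n : int) : {poly C} * {poly C} :=
  match n with
  | Posz a => ((p%:P + 'X) ^+ a, (p%:P - 'X) ^+ a)
  | Negz b => ((p%:P - 'X) ^+ b.+1, (p%:P + 'X) ^+ b.+1)
  end.

Definition rho_frac (p q : C) (n m : int) (rho0 : C) : {poly C} * {poly C} :=
  ((pw_pair p n).1 * (pw_pair q m).1 * rho0%:P,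
   (pw_pair p n).2 * (pw_pair q m).2).

Definition frac_deriv (f : {poly C} * {poly C}) : {poly C} * {poly C} :=
  (f.1^`() * f.2 - f.1 * f.2^`(), f.2 ^+ 2).

Definition rho_taylor (p q : C) (n m : int) (rho0 kappa : C) (l : nat) : C :=
  let f := iter l frac_deriv (rho_frac p q n m rho0) in
  f.1.[kappa] / f.2.[kappa] / (l`!)%:R.

(* Blocks (all indices below are 0-based; the paper's are 1-based).    *)

Definition jordanJ (N : nat) (kappa : C) : 'M[C]_N :=
  \matrix_(i, j) (if i == j :> nat then kappa
                  else if i == j.+1 :> nat then 1 else 0).

Definition toeplitzL (N : nat) (a : nat -> C) : 'M[C]_N :=
  \matrix_(i, j) (if (j <= i)%N then a (i - j)%N else 0).

Definition FJ p q n m rho0 (N : nat) (kappa : C) : 'M[C]_N :=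
  \matrix_(i, j) (if (j <= i)%N then rho_taylor p q n m rho0 kappa (i - j) else 0).

Definition rJ p q n m rho0 (N : nat) (kappa : C) : 'cV[C]_N :=
  \col_(i < N) rho_taylor p q n m rho0 kappa i.

Definition HJ (N : nat) (d : nat -> C) : 'M[C]_N :=
  \matrix_(i, j) (if (i + j < N)%N then d (i + j)%N else 0).

(* G_{1,j}: (l,t) entry -(-1/(k_l+kappa))^t  (t 1-based) *)
Definition G1J (N1 : nat) (k : 'I_N1 -> C) (N : nat) (kappa : C) : 'M[C]_(N1, N) :=
  \matrix_(l, t) (- (- (k l + kappa)^-1) ^+ t.+1).

(* G_{i,j}: (l,t) entry binom(l+t-2,l-1)(-1)^(l+t)/(kappa_i+kappa_j)^(l+t-1) *)
Definition GJJ (Ni Nj : nat) (ki kj : C) : 'M[C]_(Ni, Nj) :=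
  \matrix_(l, t) ('C(l + t, l)%:R * (-1) ^+ (l + t)%N / (ki + kj) ^+ (l + t)%N.+1).

Section Objects.
Variables (N1 : nat) (k c1 : 'I_N1 -> C).
Variables (s : nat) (Nj : 'I_s -> nat) (kap : 'I_s -> C) (cJ aJ : 'I_s -> nat -> C).

Definition Ntot := (N1 + \sum_(j < s) Nj j)%N.

Definition Gamma : 'M[C]_Ntot :=
  block_mx (diag_mx (\row_i k i)) 0 0 (mxdiag (fun j => jordanJ (Nj j) (kap j))).

Definition Amat : 'M[C]_Ntot :=
  block_mx 1%:M 0 0 (mxdiag (fun j => toeplitzL (Nj j) (aJ j))).

Definition Fmat p q n m rho0 : 'M[C]_Ntot :=
  block_mx (diag_mx (\row_i rho p q n m rho0 (k i))) 0 0
           (mxdiag (fun j => FJ p q n m rho0 (Nj j) (kap j))).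

Definition Hmat : 'M[C]_Ntot :=
  block_mx (diag_mx (\row_i c1 i)) 0 0 (mxdiag (fun j => HJ (Nj j) (cJ j))).

Definition G11 : 'M[C]_N1 := \matrix_(i, j) (k i + k j)^-1.
Definition G1 : 'M[C]_(N1, \sum_(j < s) Nj j) :=
  \mxrow_j G1J k (Nj j) (kap j).
Definition Gmat : 'M[C]_Ntot :=
  block_mx G11 G1 G1^T (\mxblock_(i, j) GJJ (Nj i) (Nj j) (kap i) (kap j)).

Definition Mmat p q n m rho0 : 'M[C]_Ntot :=
  Amat *m Fmat p q n m rho0 *m Gmat *m Hmat.

Definition rvec0 p q n m rho0 : 'cV[C]_Ntot :=
  col_mx (\col_i rho p q n m rho0 (k i))
         (\mxcol_j rJ p q n m rho0 (Nj j) (kap j)).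
Definition rvec p q n m rho0 : 'cV[C]_Ntot := Amat *m rvec0 p q n m rho0.

Definition cvec : 'rV[C]_Ntot :=
  row_mx (\row_i c1 i) (\mxrow_j (\row_(l < Nj j) cJ j l)).

Definition wsol p q rho0 (n m : int) : C :=
  (cvec *m invmx (1%:M + Mmat p q n m rho0) *m rvec p q n m rho0) 0 0.

End Objects.
End LPKdV.

From HB Require Import structures.
From mathcomp Require Import all_boot all_order all_algebra.
From mathcomp Require Import ring.
Import Order.TTheory GRing.Theory Num.Theory.
Local Open Scope ring_scope.

(* The proof separates an abstract dressing argument from the verification
   that the concrete data fit into it.
   - [Dressing]: over any field, let K be a square matrix, c a row, and
     M(n,m), r(n,m) lattice fields with 1 + M invertible, satisfying the
     Sylvester equation K M + M K = r c and the dispersion relations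
     (p - K) M(n+1,m) = (p + K) M(n,m), (p + K) r(n,m) = (p - K) r(n+1,m)
     (and likewise for q, m).  Then tau = c (1 + M)^-1 r solves lpKdV: each
     lattice step gives two bilinear relations between tau and auxiliary
     scalars, and four of them combine into the equation.
   - [JordanBlocks], [Taylor]: blockwise facts; Jordan blocks commute with
     lower triangular Toeplitz blocks, are symmetrized by Hankel blocks, and
     the Cauchy blocks of G solve rank-one Sylvester equations; the Taylor
     coefficients of rho(k) obey the recursion coming from
     (p - k) rho(n+1) = (p + k) rho(n).
   - [CauchyMatrix]: these assemble into the Sylvester equation for
     M = A F G H with K = Gamma and into the dispersion relations; the
     m-direction follows from the symmetry (p,n) <-> (q,m). *)

Set Implicit Arguments. Unset Strict Implicit. Unset Printing Implicit Defensive.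

Lemma addmx_entry (R : nmodType) m n (A B : 'M[R]_(m, n)) i j :
  (A + B) i j = A i j + B i j.
Proof. by rewrite mxE. Qed.

Lemma oppmx_entry (R : zmodType) m n (A : 'M[R]_(m, n)) i j : (- A) i j = - A i j.
Proof. by rewrite mxE. Qed.

Lemma submx_entry (R : zmodType) m n (A B : 'M[R]_(m, n)) i j :
  (A - B) i j = A i j - B i j.
Proof. by rewrite !mxE. Qed.

Lemma scalemx_entry (R : pzRingType) m n a (A : 'M[R]_(m, n)) i j :
  (a *: A) i j = a * A i j.
Proof. by rewrite mxE. Qed.

Section Dressing.
Variables (F : fieldType) (N : nat) (K : 'M[F]_N) (c : 'rV[F]_N).

Lemma mx11_mulE (A B : 'M[F]_1) : (A *m B) 0 0 = A 0 0 * B 0 0.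
Proof. by rewrite mxE big_ord1. Qed.

Lemma dressed_shift p (M M' : 'M_N) (r r' : 'cV_N) :
  K *m M + M *m K = r *m c -> K *m M' + M' *m K = r' *m c ->
  (p%:M - K) *m M' = (p%:M + K) *m M ->
  (p%:M - K) *m (1%:M + M') = (1%:M + M) *m (p%:M - K) + r *m c /\
  (1%:M + M') *m (p%:M + K) = (p%:M + K) *m (1%:M + M) + r' *m c.
Proof.
move=> syl syl' shiftM.
have regroup (x y z v : 'M[F]_N) : x + (y + z) = x + (y - v) + (z + v).
  by rewrite -addrA addrACA addNr addr0.
split.
  rewrite mulmxDr mulmx1 shiftM mulmxDl mul1mx -syl mulmxDl mulmxBr.
  by rewrite scalar_mxC !mul_scalar_mx; apply: regroup.
rewrite mulmxDl mul1mx mulmxDr mulmx1 -syl' mulmxDr -shiftM mulmxBl scalar_mxC.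
by rewrite !mul_scalar_mx [K *m M' + _]addrC; apply: regroup.
Qed.

Lemma shift_identities_mx p (X X' : 'M_N) (r r' : 'cV_N) :
  X \in unitmx -> X' \in unitmx ->
  (p%:M - K) *m X' = X *m (p%:M - K) + r *m c ->
  X' *m (p%:M + K) = (p%:M + K) *m X + r' *m c ->
  (p%:M + K) *m r = (p%:M - K) *m r' ->
  p *: (c *m invmx X *m r) + c *m invmx X *m K *m r
    = p *: (c *m invmx X' *m r') - c *m K *m invmx X' *m r'
      + (c *m invmx X *m r) *m (c *m invmx X' *m r')
  /\ p *: (c *m invmx X *m r) + c *m K *m invmx X *m r
    = p *: (c *m invmx X' *m r') - c *m invmx X' *m K *m r'
      + (c *m invmx X' *m r') *m (c *m invmx X *m r).
Proof.
move=> uX uX' relM relP relr.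
have invM : invmx X *m (p%:M - K)
    = (p%:M - K) *m invmx X' + invmx X *m r *m (c *m invmx X').
  have := congr1 (fun Y => invmx X *m Y *m invmx X') relM => /=.
  rewrite -!mulmxA (mulmxV uX') mulmx1 mulmxDl mulmxDr !mulmxA (mulVmx uX).
  by rewrite mul1mx -!mulmxA.
have invP : (p%:M + K) *m invmx X
    = invmx X' *m (p%:M + K) + invmx X' *m r' *m (c *m invmx X).
  have := congr1 (fun Y => invmx X' *m Y *m invmx X) relP => /=.
  rewrite !mulmxA (mulVmx uX') mul1mx mulmxDr mulmxDl !mulmxA -(mulmxA _ X).
  by rewrite (mulmxV uX) mulmx1 -!mulmxA.
split.
  transitivity (c *m (invmx X *m (p%:M - K)) *m r').
    apply/esym; rewrite -mulmxA -(mulmxA (invmx X)) -relr mulmxDl mul_scalar_mx.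
    by rewrite !mulmxDr -!scalemxAr !mulmxA.
  rewrite invM mulmxDr mulmxDl mulmxBl mul_scalar_mx mulmxBr mulmxBl.
  by rewrite -scalemxAr -scalemxAl !mulmxA.
transitivity (c *m ((p%:M + K) *m invmx X) *m r).
  by apply/esym; rewrite mulmxDl mul_scalar_mx mulmxDr mulmxDl -scalemxAr -scalemxAl !mulmxA.
rewrite invP mulmxDr mulmxDl -(mulmxA c (invmx X' *m (p%:M + K))).
rewrite -(mulmxA (invmx X') _ r) relr mulmxBl mul_scalar_mx mulmxBr mulmxBr.
by rewrite -!scalemxAr !mulmxA.
Qed.

Lemma shift_identities p (M M' : 'M_N) (r r' : 'cV_N) :
  let X := 1%:M + M in let X' := 1%:M + M' in
  X \in unitmx -> X' \in unitmx ->
  K *m M + M *m K = r *m c -> K *m M' + M' *m K = r' *m c ->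
  (p%:M - K) *m M' = (p%:M + K) *m M ->
  (p%:M + K) *m r = (p%:M - K) *m r' ->
  p * (c *m invmx X *m r) 0 0 + (c *m invmx X *m K *m r) 0 0
    = p * (c *m invmx X' *m r') 0 0 - (c *m K *m invmx X' *m r') 0 0
      + (c *m invmx X *m r) 0 0 * (c *m invmx X' *m r') 0 0
  /\ p * (c *m invmx X *m r) 0 0 + (c *m K *m invmx X *m r) 0 0
    = p * (c *m invmx X' *m r') 0 0 - (c *m invmx X' *m K *m r') 0 0
      + (c *m invmx X' *m r') 0 0 * (c *m invmx X *m r) 0 0.
Proof.
move=> X X' uX uX' syl syl' shiftM shiftr.
have [relM relP] := dressed_shift syl syl' shiftM.
have [h1 h2] := shift_identities_mx uX uX' relM relP shiftr.
by split; [move: h1 | move: h2] => /(congr1 (fun A : 'M_1 => A 0 0));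
  rewrite /= !(addmx_entry, oppmx_entry, scalemx_entry, mx11_mulE).
Qed.

Lemma eq_of_combination (x y a1 b1 a2 b2 a3 b3 a4 b4 : F) :
  a1 = b1 -> a2 = b2 -> a3 = b3 -> a4 = b4 ->
  x - y = (a2 - b2) + (a3 - b3) - (a1 - b1) - (a4 - b4) -> x = y.
Proof.
by move=> -> -> -> ->; rewrite !subrr !subr0 addr0 => /eqP; rewrite subr_eq0 => /eqP.
Qed.

Variables (p q : F) (M : int -> int -> 'M[F]_N) (r : int -> int -> 'cV[F]_N).
Hypothesis dressed_unit : forall n m, 1%:M + M n m \in unitmx.
Hypothesis sylvester : forall n m, K *m M n m + M n m *m K = r n m *m c.
Hypothesis M_shift_n : forall n m, (p%:M - K) *m M (n + 1) m = (p%:M + K) *m M n m.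
Hypothesis r_shift_n : forall n m, (p%:M + K) *m r n m = (p%:M - K) *m r (n + 1) m.
Hypothesis M_shift_m : forall n m, (q%:M - K) *m M n (m + 1) = (q%:M + K) *m M n m.
Hypothesis r_shift_m : forall n m, (q%:M + K) *m r n m = (q%:M - K) *m r n (m + 1).

Definition tau n m := (c *m invmx (1%:M + M n m) *m r n m) 0 0.

(* The
   four relations used are the p-steps from (n,m) and (n,m+1) and the q-steps
   from (n,m) and (n+1,m); the auxiliary scalars c X^-1 K r, c K X^-1 r at the
   various corners cancel in the sum. *)
Theorem lpkdv_dressing n m :
  (p + q + tau n m - tau (n + 1) (m + 1)) * (p - q + tau n (m + 1) - tau (n + 1) m)
  = p ^+ 2 - q ^+ 2.
Proof.
have step_n a b := shift_identities (dressed_unit a b) (dressed_unit (a + 1) b)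
  (sylvester a b) (sylvester (a + 1) b) (M_shift_n a b) (r_shift_n a b).
have step_m a b := shift_identities (dressed_unit a b) (dressed_unit a (b + 1))
  (sylvester a b) (sylvester a (b + 1)) (M_shift_m a b) (r_shift_m a b).
have [_ e3] := step_n n m; have [e2 _] := step_n n (m + 1).
have [e1 _] := step_m (n + 1) m; have [_ e4] := step_m n m.
apply: (eq_of_combination e1 e2 e3 e4); rewrite /tau; ring.
Qed.

End Dressing.

Ltac field_nz := field; repeat (apply/andP; split);
  try (match goal with H : _ |- _ => exact: H end).

Lemma sum_delta (R : pzSemiRingType) N (i : nat) (f : nat -> R) :
  \sum_(u < N) (i == u :> nat)%:R * f u = if (i < N)%N then f i else 0.
Proof.
elim: N => [|N IH]; first by rewrite big_ord0.
rewrite big_ord_recr /= IH ltnS.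
by case: (ltngtP i N) => [h|h|->]; rewrite ?mul0r ?addr0 ?mul1r ?add0r ?leqnn.
Qed.

Lemma sum_delta_succ (R : pzSemiRingType) N (i : nat) (f : nat -> R) :
  \sum_(u < N) (i == u.+1 :> nat)%:R * f u =
  if i is i'.+1 then (if (i' < N)%N then f i' else 0) else 0.
Proof.
case: i => [|i]; first by rewrite big1 // => u _; rewrite mul0r.
by rewrite (eq_bigr (fun u : 'I_N => (i == u :> nat)%:R * f u)) ?sum_delta.
Qed.

Section JordanBlocks.
Variable C : numClosedFieldType.

Lemma jordanE N (kap : C) (x y : 'I_N) :
  jordanJ N kap x y = (x == y :> nat)%:R * kap + (x == y.+1 :> nat)%:R.
Proof.
rewrite mxE; case: (eqVneq (x : nat) y) => [->|ne].
  by rewrite (ltn_eqF (ltnSn _)) mul1r addr0.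
by case: (x == y.+1 :> nat); rewrite mul0r add0r.
Qed.

Lemma mul_jordan_mx N (kap : C) m (g : nat -> 'I_m -> C) (i : 'I_N) (j : 'I_m) :
  (jordanJ N kap *m \matrix_(i < N, j < m) g i j) i j
  = kap * g i j + (if (i : nat) is i'.+1 then g i' j else 0).
Proof.
rewrite mxE; under eq_bigr do rewrite jordanE mxE mulrDl.
rewrite big_split /=; under eq_bigr do rewrite mulrAC.
rewrite -mulr_suml (sum_delta N i (fun u => g u j)) ltn_ord mulrC.
rewrite (sum_delta_succ N i (fun u => g u j)).
by case: i => [[|i] /= hi] //; rewrite ltnW.
Qed.

Lemma mul_mx_trjordan N (kap : C) m (g : 'I_m -> nat -> C) (i : 'I_m) (j : 'I_N) :
  (\matrix_(i < m, j < N) g i j *m (jordanJ N kap)^T) i j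
  = kap * g i j + (if (j : nat) is j'.+1 then g i j' else 0).
Proof.
rewrite mxE; under eq_bigr do rewrite mxE mxE jordanE mulrDr.
rewrite big_split /=; under eq_bigr => u _ do rewrite mulrA [g i u * _]mulrC.
under [X in _ + X = _]eq_bigr do rewrite mulrC.
rewrite -mulr_suml (sum_delta N j (fun u => g i u)) ltn_ord mulrC.
rewrite (sum_delta_succ N j (fun u => g i u)).
by case: j => [[|j] /= hj] //; rewrite ltnW.
Qed.

Lemma mul_mx_jordan N (kap : C) m (g : 'I_m -> nat -> C) (i : 'I_m) (j : 'I_N) :
  (\matrix_(i < m, j < N) g i j *m jordanJ N kap) i j
  = kap * g i j + (if (j.+1 < N)%N then g i j.+1 else 0).
Proof.
rewrite mxE; under eq_bigr do rewrite mxE jordanE mulrDr.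
rewrite big_split /=; under eq_bigr => u _ do rewrite mulrA [g i u * _]mulrC eq_sym.
under [X in _ + X = _]eq_bigr do rewrite mulrC eq_sym.
rewrite -mulr_suml (sum_delta N j (fun u => g i u)) ltn_ord mulrC.
by rewrite (sum_delta N j.+1 (fun u => g i u)).
Qed.

Lemma mul_trjordan_mx N (kap : C) m (g : nat -> 'I_m -> C) (i : 'I_N) (j : 'I_m) :
  ((jordanJ N kap)^T *m \matrix_(i < N, j < m) g i j) i j
  = kap * g i j + (if (i.+1 < N)%N then g i.+1 j else 0).
Proof.
rewrite mxE; under eq_bigr do rewrite mxE jordanE mxE mulrDl.
rewrite big_split /=; under eq_bigr do rewrite mulrAC eq_sym.
under [X in _ + X = _]eq_bigr do rewrite eq_sym.
rewrite -mulr_suml (sum_delta N i (fun u => g u j)) ltn_ord mulrC.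
by rewrite (sum_delta N i.+1 (fun u => g u j)).
Qed.

Lemma jordan_toeplitzC N (kap : C) t :
  jordanJ N kap *m toeplitzL N t = toeplitzL N t *m jordanJ N kap.
Proof.
apply/matrixP => i j.
rewrite (mul_jordan_mx kap (fun i (j : 'I_N) => if (j <= i)%N then t (i - j)%N else 0)).
rewrite (mul_mx_jordan kap (fun (i : 'I_N) j => if (j <= i)%N then t (i - j)%N else 0)).
congr (_ + _); case: i => [[|i] hi] /=; first by case: ifP.
by case: ifP => hj; [rewrite (@leq_ltn_trans i.+1) | case: ifP].
Qed.

(* A recursion t' <-> t on the Taylor coefficients of a function is the same
   as the Toeplitz intertwining (p - J) T(t') = (p + J) T(t). *)
Lemma toeplitz_shift N (kap p : C) t t' :
  (forall l, (p - kap) * t' l - (if l is l'.+1 then t' l' else 0)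
             = (p + kap) * t l + (if l is l'.+1 then t l' else 0)) ->
  (p%:M - jordanJ N kap) *m toeplitzL N t' = (p%:M + jordanJ N kap) *m toeplitzL N t.
Proof.
move=> ht; apply/matrixP => i j.
rewrite mulmxBl mulmxDl !mul_scalar_mx submx_entry addmx_entry !scalemx_entry.
rewrite (mul_jordan_mx kap (fun i (j : 'I_N) => if (j <= i)%N then t' (i - j)%N else 0)).
rewrite (mul_jordan_mx kap (fun i (j : 'I_N) => if (j <= i)%N then t (i - j)%N else 0)).
rewrite !mxE.
have ht0 := ht 0%N; rewrite /= subr0 addr0 in ht0.
case: i => [[|i] hi] /=.
  case: ifP => _; last by rewrite !mulr0 !addr0 subr0.
  by rewrite sub0n !addr0 -mulrBl -mulrDl ht0.
case: (ltngtP j i.+1) => hj.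
- have hj' : (j <= i)%N by rewrite -ltnS.
  rewrite hj' subSn //; have /= h := ht (i - j).+1.
  transitivity ((p - kap) * t' (i - j).+1 - t' (i - j)%N); first by ring.
  by rewrite h; ring.
- by rewrite leqNgt (ltnW hj) /=; ring.
- by rewrite hj ltnn subnn !addr0 -mulrBl -mulrDl ht0.
Qed.
Lemma hankel_jordanC N (kap : C) d : (jordanJ N kap)^T *m HJ N d = HJ N d *m jordanJ N kap.
Proof.
apply/matrixP => i j.
rewrite (mul_trjordan_mx kap (fun i (j : 'I_N) => if (i + j < N)%N then d (i + j)%N else 0)).
rewrite (mul_mx_jordan kap (fun (i : 'I_N) j => if (i + j < N)%N then d (i + j)%N else 0)).
congr (_ + _); rewrite addSn addnS.
case: (ltnP (i + j).+1 N) => h; last by case: ifP; case: ifP.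
by rewrite (leq_ltn_trans _ h) ?(leq_ltn_trans _ h) ?ltnS ?leq_addr ?leq_addl.
Qed.

Definition e0col N : 'cV[C]_N := \col_(l < N) (l == 0 :> nat)%:R.

Lemma G1J_sylvester N1 (k : 'I_N1 -> C) N (kap : C) :
  (forall l : 'I_N1, (0 < N)%N -> k l + kap != 0) ->
  diag_mx (\row_i k i) *m G1J k N kap + G1J k N kap *m (jordanJ N kap)^T
  = const_mx 1 *m (e0col N)^T.
Proof.
move=> hs; apply/matrixP => l t.
rewrite addmx_entry mul_diag_mx.
rewrite (mul_mx_trjordan kap (fun l (t : nat) => - (- (k l + kap)^-1) ^+ t.+1)).
rewrite !mxE big_ord1 !mxE mul1r.
have s0 : k l + kap != 0 by apply: hs; apply: (leq_ltn_trans _ (ltn_ord t)).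
move: s0; case: t => [[|t] ht] /=; move: (k l) => a s0.
  by rewrite expr1 opprK; field.
by rewrite !exprS; move: (_ ^+ t) => e; field.
Qed.

Lemma GJJ_sylvester Ni Nj (ki kj : C) : ki + kj != 0 ->
  jordanJ Ni ki *m GJJ Ni Nj ki kj + GJJ Ni Nj ki kj *m (jordanJ Nj kj)^T
  = e0col Ni *m (e0col Nj)^T.
Proof.
move=> s0; apply/matrixP => l t.
pose g (l t : nat) := 'C(l + t, l)%:R * (-1) ^+ (l + t)%N / (ki + kj) ^+ (l + t)%N.+1.
rewrite addmx_entry (mul_jordan_mx ki (fun l (t : 'I_Nj) => g l t)).
rewrite (mul_mx_trjordan kj (fun (l : 'I_Ni) t => g l t)) !mxE big_ord1 !mxE /g.
move: s0; case: l => [[|l] hl]; case: t => [[|t] ht] /= s0.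
- by rewrite add0n !bin0 expr0 expr1 !mul1r; field.
- rewrite !add0n !bin0 !mul1r addr0 !exprS.
  have St : (ki + kj) ^+ t != 0 by rewrite expf_neq0.
  by move: St; move: ((-1) ^+ t) ((ki + kj) ^+ t) => e T St; field_nz.
- rewrite !addn0 !binn !mul1r addr0 !exprS.
  have St : (ki + kj) ^+ l != 0 by rewrite expf_neq0.
  by move: St; move: ((-1) ^+ l) ((ki + kj) ^+ l) => e T St; field_nz.
- rewrite !addSn !addnS !binS !natrD !exprS.
  have St : (ki + kj) ^+ (l + t) != 0 by rewrite expf_neq0.
  by move: St; move: ((-1) ^+ (l + t)) ((ki + kj) ^+ (l + t)) => e T St; field_nz.
Qed.
End JordanBlocks.

Section Taylor.
Variable C : numClosedFieldType.
Implicit Types (f g : {poly C} * {poly C}).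

Local Notation D := (@frac_deriv C).

Definition frac_eq f g := f.1 * g.2 = g.1 * f.2.

Lemma frac_deriv_eq f g : frac_eq f g -> frac_eq (D f) (D g).
Proof.
rewrite /frac_eq /frac_deriv /=; case: f g => [a b] [c d] /= h.
have h0 : a * d - c * b = 0 by rewrite h subrr.
have h1 : a^`() * d + a * d^`() - (c^`() * b + c * b^`()) = 0.
  by rewrite -!derivM -derivB h0 deriv0.
apply/eqP; rewrite -subr_eq0; apply/eqP.
transitivity (b * d * (a^`() * d + a * d^`() - (c^`() * b + c * b^`()))
   - (b^`() * d + b * d^`()) * (a * d - c * b)); first by ring.
by rewrite h0 h1; ring.
Qed.

Lemma iter_frac_deriv_eq l f g : frac_eq f g -> frac_eq (iter l D f) (iter l D g).
Proof. by elim: l => [|l IH] //= /IH; apply: frac_deriv_eq. Qed.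

Lemma iter_frac_deriv_den l f : (iter l D f).2 = f.2 ^+ (2 ^ l).
Proof. by elim: l => [|l IH] //=; rewrite IH -exprM expnS mulnC. Qed.

Definition frac_val (x : C) f := f.1.[x] / f.2.[x].

Lemma frac_val_eq x f g :
  frac_eq f g -> f.2.[x] != 0 -> g.2.[x] != 0 -> frac_val x f = frac_val x g.
Proof.
move=> h nf ng; rewrite /frac_val; apply/eqP; rewrite eqr_div //.
by have := congr1 (horner^~ x) h; rewrite /= !hornerM => ->.
Qed.

Definition frac_scale (P : {poly C}) f := (P * f.1, f.2).

Lemma frac_val_scale (P : {poly C}) f x : frac_val x (frac_scale P f) = P.[x] * frac_val x f.
Proof. by rewrite /frac_val /frac_scale /= hornerM mulrA. Qed.

(* Leibniz rule for an affine factor P (with P' = c0): the (l+1)-st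
   derivative of P f is P f^(l+1) + (l+1) c0 f^(l), on representatives. *)
Lemma iter_frac_deriv_scale (P : {poly C}) c0 f : P^`() = c0%:P -> forall l,
  iter l.+1 D (frac_scale P f) =
   (P * (iter l.+1 D f).1
      + ((l.+1)%:R * c0)%:P * ((iter l D f).1 * (iter l D f).2),
    (iter l.+1 D f).2).
Proof.
move=> dP; elim=> [|l IH].
  by rewrite /= /frac_deriv /frac_scale /=; congr (_, _); rewrite derivM dP mul1r; ring.
rewrite iterS IH [in RHS]iterS.
set A0 := (iter l D f).1; set B0 := (iter l D f).2.
have -> : iter l.+1 D f = D (A0, B0) by rewrite /= -surjective_pairing.
rewrite /frac_deriv /=.
set A1 := A0^`() * B0 - A0 * B0^`().
have eA : A1 = A0^`() * B0 - A0 * B0^`() by [].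
clearbody A1; congr (_, _).
rewrite !derivM !derivD !derivM derivC dP !mul0r !add0r.
move: (A1^`()) => d1.
by rewrite eA -!natr1 !mulrDl !rmorphD /= mul1r; ring.
Qed.

Lemma frac_val_deriv_scale (P : {poly C}) c0 f x :
  P^`() = c0%:P -> f.2.[x] != 0 -> forall l,
  frac_val x (iter l.+1 D (frac_scale P f))
   = P.[x] * frac_val x (iter l.+1 D f) + (l.+1)%:R * c0 * frac_val x (iter l D f).
Proof.
move=> dP nf l; rewrite (iter_frac_deriv_scale f dP) /frac_val.
have nB : (iter l D f).2.[x] != 0 by rewrite iter_frac_deriv_den horner_exp expf_neq0.
rewrite iterS; move: nB; set F := iter l D f => nB.
rewrite /frac_deriv /= !(hornerD, hornerM, hornerN, hornerC).
move: nB; move: (F.2.[x]) (F.1.[x]) ((F.1)^`().[x]) ((F.2)^`().[x]) (P.[x]).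
by move=> b a a1 b1 pp nb; field.
Qed.

Lemma int_succ_cases (n : int) :
  (exists a : nat, n = Posz a /\ n + 1 = Posz a.+1) \/
  (n = Negz 0 /\ n + 1 = Posz 0) \/
  (exists b : nat, n = Negz b.+1 /\ n + 1 = Negz b).
Proof.
case: n => [a|[|b]]; [by left; exists a; rewrite -addn1 | by right; left |].
right; right; exists b; split => //.
by rewrite !NegzE -[b.+2]addn1 PoszD opprD -addrA addNr addr0.
Qed.

Lemma pw_shift (p : C) n :
  (p%:P - 'X) * (pw_pair p (n + 1)).1 * (pw_pair p n).2
  = (p%:P + 'X) * (pw_pair p n).1 * (pw_pair p (n + 1)).2.
Proof.
by have [[a [-> ->]]|[[-> ->]|[b [-> ->]]]] := int_succ_cases n; rewrite /= ?exprS; ring.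
Qed.

Lemma rho_frac_shift (p q : C) n m rho0 :
  frac_eq (frac_scale (p%:P - 'X) (rho_frac p q (n + 1) m rho0))
          (frac_scale (p%:P + 'X) (rho_frac p q n m rho0)).
Proof.
rewrite /frac_eq /frac_scale /rho_frac /=.
have := pw_shift p n.
move: (pw_pair p (n + 1)) (pw_pair p n) (pw_pair q m) => [a b] [c d] [e f] /= h.
transitivity ((p%:P - 'X) * a * d * (e * rho0%:P * f)); first by ring.
by rewrite h; ring.
Qed.

Lemma pw_den (p x : C) n : p - x != 0 -> p + x != 0 -> (pw_pair p n).2.[x] != 0.
Proof.
by move=> h1 h2; case: n => [a|b] /=; rewrite horner_exp expf_neq0 //;
  rewrite !(hornerD, hornerN, hornerC, hornerX).
Qed.

Lemma rho_frac_den (p q x : C) n m rho0 :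
  p - x != 0 -> p + x != 0 -> q - x != 0 -> q + x != 0 ->
  (rho_frac p q n m rho0).2.[x] != 0.
Proof. by move=> *; rewrite /rho_frac /= hornerM mulf_neq0 // pw_den. Qed.

Lemma rho_frac_sym (p q : C) n m rho0 : rho_frac p q n m rho0 = rho_frac q p m n rho0.
Proof. by rewrite /rho_frac [_ * (pw_pair q m).1]mulrC [_ * (pw_pair q m).2]mulrC. Qed.

Lemma rho_taylor_sym (p q : C) n m rho0 : rho_taylor p q n m rho0 = rho_taylor q p m n rho0.
Proof. by rewrite /rho_taylor rho_frac_sym. Qed.

Lemma rho_sym (p q : C) n m rho0 x : rho p q n m rho0 x = rho q p m n rho0 x.
Proof. by rewrite /rho [_ ^ n * _]mulrC. Qed.

(* The dispersion relation (p - k) rho(n+1) = (p + k) rho(n), and its Taylor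
   coefficients: differentiating l times at x gives the recursion that
   [toeplitz_shift] turns into a matrix identity. *)
Lemma rho_shift (p q x : C) n m rho0 : p - x != 0 -> p + x != 0 ->
  (p - x) * rho p q (n + 1) m rho0 x = (p + x) * rho p q n m rho0 x.
Proof.
move=> h1 h2; rewrite /rho exprzDr ?expr1z; last by rewrite unitfE mulf_neq0 ?invr_eq0.
by move: (_ ^ n) (_ ^ m) => u v; field.
Qed.

Lemma rho_taylor_shift (p q x : C) n m rho0 l :
  p - x != 0 -> p + x != 0 -> q - x != 0 -> q + x != 0 ->
  (p - x) * rho_taylor p q (n + 1) m rho0 x l
    - (if l is l'.+1 then rho_taylor p q (n + 1) m rho0 x l' else 0)
  = (p + x) * rho_taylor p q n m rho0 x l
    + (if l is l'.+1 then rho_taylor p q n m rho0 x l' else 0).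
Proof.
move=> h1 h2 h3 h4.
have eT n0 l0 : rho_taylor p q n0 m rho0 x l0
   = frac_val x (iter l0 D (rho_frac p q n0 m rho0)) / (l0`!)%:R by [].
have d0 := rho_frac_den n m rho0 h1 h2 h3 h4.
have d1 := rho_frac_den (n + 1) m rho0 h1 h2 h3 h4.
have := @frac_val_eq x _ _ (iter_frac_deriv_eq l (rho_frac_shift p q n m rho0)).
rewrite !iter_frac_deriv_den /= !horner_exp => /(_ (expf_neq0 _ d1) (expf_neq0 _ d0)).
have dm : (p%:P - 'X)^`() = (-1)%:P by rewrite derivB derivC derivX sub0r polyCN.
have dp : (p%:P + 'X)^`() = 1%:P by rewrite derivD derivC derivX add0r.
have hm : (p%:P - 'X).[x] = p - x by rewrite hornerD hornerN hornerC hornerX.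
have hp : (p%:P + 'X).[x] = p + x by rewrite hornerD hornerC hornerX.
case: l => [|l]; first by rewrite /= !frac_val_scale hm hp !eT /= !divr1 subr0 addr0.
rewrite (frac_val_deriv_scale dm d1) (frac_val_deriv_scale dp d0) hm hp !eT factS natrM.
have nf : (l`!)%:R != 0 :> C by rewrite pnatr_eq0 -lt0n fact_gt0.
have nl : (l.+1)%:R != 0 :> C by rewrite pnatr_eq0.
move: nf nl; move: (frac_val x _) (frac_val x _) (frac_val x _) (frac_val x _).
move: ((l`!)%:R : C) ((l.+1)%:R : C) => F L a b c d nF nL E.
apply/eqP; rewrite -subr_eq0; apply/eqP.
transitivity (((p - x) * d + L * -1 * c - ((p + x) * b + L * 1 * a)) / (L * F)).
  by field; rewrite nF nL.
by rewrite E subrr mul0r.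
Qed.

End Taylor.
Lemma mxdiag_mul (R : pzRingType) s (n : 'I_s -> nat) (A B : forall j, 'M[R]_(n j)) :
  mxdiag A *m mxdiag B = mxdiag (fun j => A j *m B j).
Proof.
rewrite {2}/mxdiag mul_mxdiag_mxblock /mxdiag; apply/eq_mxblock => i j.
by case: eqVneq => [<-|_]; rewrite ?conform_mx_id ?mulmx0.
Qed.

Section CauchyMatrix.
Variable C : numClosedFieldType.
Variables (N1 : nat) (k c1 : 'I_N1 -> C).
Variables (s : nat) (Nj : 'I_s -> nat) (kap : 'I_s -> C) (cJ aJ : 'I_s -> nat -> C).

Local Notation Gam := (Gamma k Nj kap).
Local Notation Amx := (Amat N1 Nj aJ).
Local Notation Hmx := (Hmat c1 Nj cJ).
Local Notation Gmx := (Gmat k Nj kap).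
Local Notation Fmx := (Fmat k Nj kap).
Local Notation Mmx := (Mmat k c1 Nj kap cJ aJ).
Local Notation rv := (rvec k Nj kap aJ).
Local Notation cv := (cvec c1 Nj cJ).

Lemma eigenvalue_k (i : 'I_N1) : eigenvalue Gam (k i).
Proof.
apply/eigenvalueP; exists (row_mx (delta_mx 0 i) 0).
  rewrite /Gamma mul_row_block !(mulmx0, mul0mx, addr0, add0r) scale_row_mx scaler0.
  congr row_mx; apply/matrixP => a b; rewrite mul_mx_diag !mxE (ord1 a) eqxx /=.
  by case: eqP => [->|]; rewrite ?mulr1 ?mulr0 ?mul0r // mul1r.
apply/eqP => /(congr1 (fun M : 'M[C]_(1, _) => M 0 (lshift (\sum_(j < s) Nj j) i))).
by rewrite /= row_mxEl !mxE !eqxx /= => /eqP; rewrite oner_eq0.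
Qed.

Lemma eigenvalue_kap j : (0 < Nj j)%N -> eigenvalue Gam (kap j).
Proof.
move=> pos; apply/eigenvalueP.
pose w : 'rV[C]_(\sum_(j < s) Nj j) :=
  mxrow (fun j' => \row_(l < Nj j') ((j' == j) && (l == 0 :> nat))%:R).
exists (row_mx 0 w).
  rewrite /Gamma mul_row_block !(mulmx0, mul0mx, addr0, add0r) scale_row_mx scaler0.
  congr row_mx; rewrite /w mul_mxrow_mxdiag -[in RHS](submxrowK (_ *: _)).
  apply/eq_mxrow => j'; rewrite -mul_scalar_mx -mul_submxrow mxrowK mul_scalar_mx.
  apply/matrixP => a b.
  rewrite (mul_mx_jordan (kap j') (fun (_ : 'I_1) (l : nat) => ((j' == j) && (l == 0 :> nat))%:R)).
  rewrite !mxE /= andbF if_same addr0.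
  by case: (eqVneq j' j) => e; [rewrite (congr1 kap e) | rewrite /= !mulr0].
apply/eqP => h.
have : w = 0 by move: h; rewrite -row_mx0 => /eq_row_mx [].
move/(congr1 (fun M => submxrow M j)); rewrite /w mxrowK submxrow0.
move=> /matrixP/(_ 0 (Ordinal pos)).
by rewrite !mxE !eqxx /= => /eqP; rewrite oner_eq0.
Qed.

Definition off_spectrum (p : C) :=
  forall lam, eigenvalue Gam lam -> p - lam != 0 /\ p + lam != 0.

Lemma Gamma_AmatC : Gam *m Amx = Amx *m Gam.
Proof.
rewrite /Gamma /Amat !mulmx_block !mulmx0 !mul0mx !addr0 !add0r mulmx1 mul1mx !mxdiag_mul.
by congr block_mx; apply/eq_mxdiag => j; rewrite jordan_toeplitzC.
Qed.

Lemma Gamma_FmatC p q n m rho0 : Gam *m Fmx p q n m rho0 = Fmx p q n m rho0 *m Gam.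
Proof.
rewrite /Gamma /Fmat !mulmx_block !mulmx0 !mul0mx !addr0 !add0r !mxdiag_mul.
congr block_mx; last by apply/eq_mxdiag => j; rewrite jordan_toeplitzC.
apply/matrixP => i j; rewrite mul_diag_mx mul_mx_diag !mxE.
by case: eqP => [->|]; rewrite ?mulr1n ?mulr0n ?mulr0 ?mul0r // mulrC.
Qed.

Lemma Gamma_Hmat : Gam^T *m Hmx = Hmx *m Gam.
Proof.
rewrite /Gamma /Hmat tr_block_mx !trmx0 tr_diag_mx tr_mxdiag.
rewrite !mulmx_block !(mulmx0, mul0mx, addr0, add0r) !mxdiag_mul.
congr block_mx; last by apply/eq_mxdiag => j; rewrite hankel_jordanC.
apply/matrixP => i j; rewrite mul_diag_mx mul_mx_diag !mxE.
by case: eqP => [->|]; rewrite ?mulr1n ?mulr0n ?mulr0 ?mul0r // mulrC.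
Qed.

Definition evec : 'cV[C]_(Ntot N1 Nj) :=
  col_mx (const_mx 1) (mxcol (fun j => e0col C (Nj j))).

Lemma Fmat_evec p q n m rho0 : Fmx p q n m rho0 *m evec = rvec0 k Nj kap p q n m rho0.
Proof.
rewrite /Fmat /evec /rvec0 mul_block_col !(mulmx0, mul0mx, addr0, add0r).
congr col_mx; first by apply/matrixP => i j; rewrite mul_diag_mx !mxE mulr1.
rewrite mul_mxdiag_mxcol; apply/eq_mxcol => j; apply/matrixP => i z.
rewrite !mxE (ord1 z); under eq_bigr do rewrite !mxE mulrC eq_sym.
rewrite (sum_delta (Nj j) 0 (fun u => if (u <= i)%N then rho_taylor p q n m rho0 (kap j) (i - u) else 0)).
by rewrite (leq_ltn_trans _ (ltn_ord i)) // subn0.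
Qed.

Lemma evec_Hmat : evec^T *m Hmx = cv.
Proof.
rewrite /Hmat /evec /cvec tr_col_mx mul_row_block !(mulmx0, mul0mx, addr0, add0r).
congr row_mx; first by apply/matrixP => i j; rewrite mul_mx_diag !mxE mul1r.
rewrite (tr_mxcol (fun j => e0col C (Nj j))) mul_mxrow_mxdiag.
apply/eq_mxrow => j; apply/matrixP => z t; rewrite !mxE.
under eq_bigr do rewrite !mxE eq_sym.
rewrite (sum_delta (Nj j) 0 (fun u => if (u + t < Nj j)%N then cJ j (u + t)%N else 0)).
by rewrite (leq_ltn_trans _ (ltn_ord t)) // add0n ltn_ord.
Qed.

Section Sylvester.
Hypothesis sum_eig_neq0 : forall lam mu : C,
  eigenvalue Gam lam -> eigenvalue Gam mu -> lam + mu != 0.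

Lemma Gmat_sylvester : Gam *m Gmx + Gmx *m Gam^T = evec *m evec^T.
Proof.
have hkk i j : k i + k j != 0 by apply: sum_eig_neq0; apply: eigenvalue_k.
have hkK i j : (0 < Nj j)%N -> k i + kap j != 0.
  by move=> h; apply: sum_eig_neq0; [apply: eigenvalue_k | apply: eigenvalue_kap].
have G1_syl : diag_mx (\row_i k i) *m G1 k Nj kap
    + G1 k Nj kap *m mxdiag (fun j => (jordanJ (Nj j) (kap j))^T)
    = const_mx 1 *m (mxcol (fun j => e0col C (Nj j)))^T.
  rewrite /G1 mul_mxrow mul_mxrow_mxdiag -mxrowD (tr_mxcol (fun j => e0col C (Nj j))).
  by rewrite mul_mxrow; apply/eq_mxrow => j; apply: G1J_sylvester => i; apply: hkK.
rewrite /Gamma /Gmat tr_block_mx !trmx0 tr_diag_mx tr_mxdiag.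
rewrite !mulmx_block !(mulmx0, mul0mx, addr0, add0r) add_block_mx /evec tr_col_mx mul_col_row.
congr block_mx => //.
- apply/matrixP => i j; rewrite addmx_entry mul_diag_mx mul_mx_diag !mxE big_ord1 !mxE mulr1.
  by have := hkk i j; move: (k i) (k j) => a b hab; field_nz.
- move/(congr1 trmx): G1_syl; rewrite linearD /= !trmx_mul trmxK tr_diag_mx tr_mxdiag.
  have -> : \mxdiag_j ((jordanJ (Nj j) (kap j))^T)^T = \mxdiag_j jordanJ (Nj j) (kap j).
    by apply/eq_mxdiag => j; rewrite trmxK.
  by move=> <-; rewrite addrC.
- rewrite mul_mxdiag_mxblock mul_mxblock_mxdiag -mxblockD.
  rewrite (tr_mxcol (fun j => e0col C (Nj j))) mul_mxcol_mxrow.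
  apply/eq_mxblock => i j; apply/matrixP => a b; rewrite GJJ_sylvester //.
  by apply: sum_eig_neq0; apply: eigenvalue_kap;
    [apply: leq_ltn_trans _ (ltn_ord a) | apply: leq_ltn_trans _ (ltn_ord b)].
Qed.

Lemma Mmat_sylvester p q n m rho0 :
  Gam *m Mmx p q n m rho0 + Mmx p q n m rho0 *m Gam = rv p q n m rho0 *m cv.
Proof.
rewrite /Mmat /rvec -Fmat_evec -evec_Hmat.
set F := Fmx _ _ _ _ _.
have e1 : Gam *m (Amx *m F *m Gmx *m Hmx) = Amx *m F *m (Gam *m Gmx) *m Hmx.
  by rewrite !mulmxA Gamma_AmatC -(mulmxA Amx Gam F) Gamma_FmatC !mulmxA.
have e2 : Amx *m F *m Gmx *m Hmx *m Gam = Amx *m F *m (Gmx *m Gam^T) *m Hmx.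
  by rewrite -!mulmxA -Gamma_Hmat !mulmxA.
by rewrite e1 e2 -mulmxDl -mulmxDr Gmat_sylvester !mulmxA.
Qed.
End Sylvester.

Lemma Fmat_shift p q n m rho0 : off_spectrum p -> off_spectrum q ->
  (p%:M - Gam) *m Fmx p q (n + 1) m rho0 = (p%:M + Gam) *m Fmx p q n m rho0.
Proof.
move=> offp offq.
rewrite /Gamma /Fmat (scalar_mx_block N1 (\sum_(j < s) Nj j) p) opp_block_mx !add_block_mx.
rewrite !mulmx_block !(mulmx0, mul0mx, addr0, add0r, oppr0, subr0).
congr block_mx.
  apply/matrixP => i j; rewrite mulmxDl mulmxDl mul_scalar_mx mul_scalar_mx mulNmx.
  rewrite !addmx_entry !oppmx_entry !scalemx_entry !mul_diag_mx !mxE.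
  case: eqP => [->|]; rewrite ?mulr1n ?mulr0n ?mulr0 ?mul0r ?oppr0 ?addr0 //.
  have [h1 h2] := offp _ (eigenvalue_k j).
  transitivity ((p - k j) * rho p q (n + 1) m rho0 (k j)); first by ring.
  by rewrite rho_shift //; ring.
rewrite -mxdiagZ -mxdiagN -mxdiagD -mxdiagD !mxdiag_mul.
apply/eq_mxdiag => j; apply/matrixP => a b.
have pos : (0 < Nj j)%N by apply: leq_ltn_trans _ (ltn_ord a).
have [h1 h2] := offp _ (eigenvalue_kap pos); have [h3 h4] := offq _ (eigenvalue_kap pos).
rewrite (@toeplitz_shift C (Nj j) (kap j) p (rho_taylor p q n m rho0 (kap j))
  (rho_taylor p q (n + 1) m rho0 (kap j))) // => l.
exact: rho_taylor_shift.
Qed.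

Lemma Mmat_rvec_shift_n p q n m rho0 : off_spectrum p -> off_spectrum q ->
  (p%:M - Gam) *m Mmx p q (n + 1) m rho0 = (p%:M + Gam) *m Mmx p q n m rho0
  /\ (p%:M + Gam) *m rv p q n m rho0 = (p%:M - Gam) *m rv p q (n + 1) m rho0.
Proof.
move=> offp offq; have fs := Fmat_shift n m rho0 offp offq.
have AC (x : C) : Amx *m (x%:M - Gam) = (x%:M - Gam) *m Amx
                  /\ Amx *m (x%:M + Gam) = (x%:M + Gam) *m Amx.
  by rewrite mulmxBr mulmxBl mulmxDr mulmxDl scalar_mxC Gamma_AmatC.
have [AC1 AC2] := AC p; split.
  by rewrite /Mmat !mulmxA -AC1 -(mulmxA Amx) fs !mulmxA AC2.
by rewrite /rvec -!Fmat_evec !mulmxA -AC2 -AC1 -!(mulmxA Amx) fs.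
Qed.

(* The data are symmetric under (p,n) <-> (q,m), which turns the n-dispersion
   into the m-dispersion. *)
Lemma Fmat_sym p q n m rho0 : Fmx p q n m rho0 = Fmx q p m n rho0.
Proof.
rewrite /Fmat; congr block_mx; first by congr diag_mx; apply/rowP => i; rewrite !mxE rho_sym.
by apply/eq_mxdiag => j; rewrite /FJ rho_taylor_sym.
Qed.

Lemma Mmat_rvec_shift_m p q n m rho0 : off_spectrum p -> off_spectrum q ->
  (q%:M - Gam) *m Mmx p q n (m + 1) rho0 = (q%:M + Gam) *m Mmx p q n m rho0
  /\ (q%:M + Gam) *m rv p q n m rho0 = (q%:M - Gam) *m rv p q n (m + 1) rho0.
Proof.
move=> offp offq; have := Mmat_rvec_shift_n m n rho0 offq offp.
have Msym n' m' : Mmx q p m' n' rho0 = Mmx p q n' m' rho0 by rewrite /Mmat Fmat_sym.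
have rsym n' m' : rv q p m' n' rho0 = rv p q n' m' rho0 by rewrite /rvec -!Fmat_evec Fmat_sym.
by rewrite !Msym !rsym.
Qed.

End CauchyMatrix.

Unset Implicit Arguments. Set Strict Implicit. Set Printing Implicit Defensive.

Theorem mainTheorem8 (C : numClosedFieldType) (p q rho0 : C)
  (N1 : nat) (k c1 : 'I_N1 -> C)
  (s : nat) (Nj : 'I_s -> nat) (kap : 'I_s -> C) (cJ aJ : 'I_s -> nat -> C)
  (Heig : forall lam mu : C,
      eigenvalue (Gamma k Nj kap) lam -> eigenvalue (Gamma k Nj kap) mu ->
      lam + mu != 0)
  (Hpq : forall lam : C, eigenvalue (Gamma k Nj kap) lam ->
      [/\ p != lam, p != - lam, q != lam & q != - lam])
  (Hinv : forall n m : int,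
      1%:M + Mmat k c1 Nj kap cJ aJ p q n m rho0 \in unitmx) :
  let w := wsol k c1 Nj kap cJ aJ p q rho0 in
  forall n m : int,
    (p + q + w n m - w (n + 1) (m + 1)) * (p - q + w n (m + 1) - w (n + 1) m)
    = p ^+ 2 - q ^+ 2.
Proof.
have offp : off_spectrum k Nj kap p.
  by move=> lam /Hpq[h1 h2 _ _]; rewrite subr_eq0 addr_eq0 h1 h2.
have offq : off_spectrum k Nj kap q.
  by move=> lam /Hpq[_ _ h3 h4]; rewrite subr_eq0 addr_eq0 h3 h4.
have sylvester n m := Mmat_sylvester c1 cJ aJ Heig p q n m rho0.
have shift_n n m := Mmat_rvec_shift_n c1 cJ aJ n m rho0 offp offq.
have shift_m n m := Mmat_rvec_shift_m c1 cJ aJ n m rho0 offp offq.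
move=> w n m.
exact: (lpkdv_dressing Hinv sylvester (fun n m => (shift_n n m).1)
  (fun n m => (shift_n n m).2) (fun n m => (shift_m n m).1) (fun n m => (shift_m n m).2) n m).
Qed.
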